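(* Let $\Omega\subset\mathbb{R}^2$ have properties (i) and $( ** )$. Then for every $\omega^\diamond=(p,q)\in\Omega^\diamond$, the line $L(\omega^\diamond)=\{(x,y)\in\mathbb{R}^2:px-qy=1\}$ is not parallel to either of the boundary rays $l_0,l_1$ of the cone $C=\operatorname{cl}(\mathbb{R}_+\Omega)$. This holds also when the rays $l_0$ and $l_1$ coincide (i.e. when $\dim\Omega=1$).
   Context: $\mathbb{R}_+=[0,\infty)$; points of $\mathbb{R}^{2*}$ are $(p,q)$. Property (i): $\Omega$ nonempty, convex, closed, $0\notin\Omega$, $\lambda\Omega\subset\Omega$ for $\lambda>1$. Property $( ** )$: $\partial C=l_0\cup l_1$ where $l_0,l_1$ are the (possibly coinciding) boundary rays from the origin of the closed cone $C=\operatorname{cl}(\mathbb{R}_+\Omega)$, and $\operatorname{dist}(l_0,\Omega)=\operatorname{dist}(l_1,\Omega)=0$. Antipolar: $\Omega^\diamond=\{(p,q):px-qy\ge1\ \forall(x,y)\in\Omega\}$. *)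

From HB Require Import structures.
From mathcomp Require Import all_boot all_order all_algebra.
From mathcomp Require Import all_classical all_reals all_analysis.
Set Implicit Arguments. Unset Strict Implicit. Unset Printing Implicit Defensive.
Import Order.TTheory GRing.Theory Num.Theory numFieldNormedType.Exports.
Local Open Scope classical_set_scope.
Local Open Scope ring_scope.

Section Defs.
Variable R : realType.

Definition convex2 (Om : set (R * R)) : Prop :=
  forall a b, Om a -> Om b -> forall t : R, 0 <= t -> t <= 1 ->
    Om (t * a.1 + (1 - t) * b.1, t * a.2 + (1 - t) * b.2).

Definition prop_i (Om : set (R * R)) : Prop :=
  Om !=set0 /\ convex2 Om /\ closed Om /\ ~ Om (0, 0) /\
  (forall l : R, 1 < l -> forall w, Om w -> Om (l * w.1, l * w.2)).

Definition cone_hull (Om : set (R * R)) : set (R * R) :=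
  [set z | exists t : R, exists w, 0 <= t /\ Om w /\ z = (t * w.1, t * w.2)].

Definition clcone (Om : set (R * R)) : set (R * R) := closure (cone_hull Om).

Definition boundary (A : set (R * R)) : set (R * R) := closure A `\` interior A.

Definition ray (d : R * R) : set (R * R) :=
  [set z | exists t : R, 0 <= t /\ z = (t * d.1, t * d.2)].

(* Euclidean distance between two subsets of the plane is zero *)
Definition dist0 (A B : set (R * R)) : Prop :=
  forall e : R, 0 < e -> exists a, exists b, A a /\ B b /\
    (a.1 - b.1) ^+ 2 + (a.2 - b.2) ^+ 2 < e ^+ 2.

Definition prop_ss (Om : set (R * R)) (d0 d1 : R * R) : Prop :=
  d0 != (0, 0) /\ d1 != (0, 0) /\
  boundary (clcone Om) = ray d0 `|` ray d1 /\
  dist0 (ray d0) Om /\ dist0 (ray d1) Om.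

Definition antipolar (Om : set (R * R)) : set (R * R) :=
  [set pq | forall w, Om w -> 1 <= pq.1 * w.1 - pq.2 * w.2].

Definition Lline (pq : R * R) : set (R * R) :=
  [set z | pq.1 * z.1 - pq.2 * z.2 = 1].

(* a line in the plane is parallel to the ray in direction d iff it is
   invariant under translation by d *)
Definition parallel_to (L : set (R * R)) (d : R * R) : Prop :=
  forall z, L z -> L (z.1 + d.1, z.2 + d.2).

End Defs.

From HB Require Import structures.
From mathcomp Require Import all_boot all_order all_algebra.
From mathcomp Require Import all_classical all_reals all_analysis.
From mathcomp Require Import ring lra.
Set Implicit Arguments. Unset Strict Implicit. Unset Printing Implicit Defensive.
Import Order.TTheory GRing.Theory Num.Theory numFieldNormedType.Exports.
Local Open Scope classical_set_scope.
Local Open Scope ring_scope.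

(** The linear form [f(x, y) = p x - q y] is at least [1] on [Omega] and, when
    [L(p, q)] is parallel to a boundary ray, vanishes on that ray.  Since [f] is
    Lipschitz, the ray then stays at distance at least [1 / |(p, q)|] from
    [Omega], contradicting [( ** )]. *)

Section LinearForm.
Variable R : realType.
Implicit Types (pq z d : R * R) (A B : set (R * R)).

Definition lform pq z : R := pq.1 * z.1 - pq.2 * z.2.

Lemma lform_scale pq t z : lform pq (t * z.1, t * z.2) = t * lform pq z.
Proof. by rewrite /lform /=; ring. Qed.

Lemma lform_sqr_le pq z :
  lform pq z ^+ 2 <= (pq.1 ^+ 2 + pq.2 ^+ 2) * (z.1 ^+ 2 + z.2 ^+ 2).
Proof.
have -> : (pq.1 ^+ 2 + pq.2 ^+ 2) * (z.1 ^+ 2 + z.2 ^+ 2) =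
          lform pq z ^+ 2 + (pq.1 * z.2 + pq.2 * z.1) ^+ 2 by rewrite /lform; ring.
by rewrite lerDl sqr_ge0.
Qed.

Lemma lform_ray_kernel pq d : lform pq d = 0 -> forall z, ray d z -> lform pq z = 0.
Proof. by move=> fd _ [t [_ ->]]; rewrite lform_scale fd mulr0. Qed.

Lemma parallel_Lline_kernel pq d :
  Lline pq !=set0 -> parallel_to (Lline pq) d -> lform pq d = 0.
Proof.
move=> [z Lz] /(_ z Lz); rewrite /Lline /= in Lz *.
by rewrite /lform; lra.
Qed.

Lemma antipolar_Lline_neq0 Om pq : Om !=set0 -> antipolar Om pq -> Lline pq !=set0.
Proof.
move=> [w Omw] /(_ w Omw) /= fw.
have fw0 : lform pq w != 0 by rewrite /lform gt_eqF //; lra.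
exists ((lform pq w)^-1 * w.1, (lform pq w)^-1 * w.2).
by rewrite /Lline /= -/(lform pq (_, _)) lform_scale mulVf.
Qed.

Lemma separated_not_dist0 pq A B :
  (forall a, A a -> lform pq a <= 0) -> (forall b, B b -> 1 <= lform pq b) ->
  ~ dist0 A B.
Proof.
move=> fA fB.
(* With [e = 1/s]: [1 <= f(a - b)^2 <= s |a - b|^2 < 1/s <= 1]. *)
set s := pq.1 ^+ 2 + pq.2 ^+ 2 + 1.
have s_ge1 : 1 <= s by rewrite /s; nra.
have s_gt0 : 0 < s by lra.
move=> /(_ s^-1); rewrite invr_gt0 => /(_ s_gt0) [a [b [Aa [Bb ab_near]]]].
set z := (a.1 - b.1, a.2 - b.2) in ab_near.
have fz : lform pq z <= -1.
  have -> : lform pq z = lform pq a - lform pq b by rewrite /lform /=; ring.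
  by have := fA _ Aa; have := fB _ Bb; lra.
have fz2 : 1 <= lform pq z ^+ 2 by nra.
have sz : s * (z.1 ^+ 2 + z.2 ^+ 2) < s^-1.
  have -> : s^-1 = s * s^-1 ^+ 2 by rewrite expr2 mulrA mulfV ?mul1r // gt_eqF.
  by rewrite ltr_pM2l.
have s_inv_le1 : s^-1 <= 1 by rewrite invf_le1.
have : (pq.1 ^+ 2 + pq.2 ^+ 2) * (z.1 ^+ 2 + z.2 ^+ 2) <= s * (z.1 ^+ 2 + z.2 ^+ 2).
  by rewrite ler_wpM2r ?addr_ge0 ?sqr_ge0 // /s lerDl.
have := lform_sqr_le pq z; lra.
Qed.

Lemma not_parallel_of_dist0 Om pq d :
  Om !=set0 -> antipolar Om pq -> dist0 (ray d) Om -> ~ parallel_to (Lline pq) d.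
Proof.
move=> Om_ne Om_pq near_d par.
have L_ne := antipolar_Lline_neq0 Om_ne Om_pq.
have ray_ker := lform_ray_kernel (parallel_Lline_kernel L_ne par).
apply: (separated_not_dist0 (pq := pq)) near_d.
- by move=> a /ray_ker ->.
- exact: Om_pq.
Qed.

End LinearForm.

Theorem lemma6 (R : realType) (Om : set (R * R)) (d0 d1 : R * R) :
  prop_i Om -> prop_ss Om d0 d1 ->
  forall pq, antipolar Om pq ->
    ~ parallel_to (Lline pq) d0 /\ ~ parallel_to (Lline pq) d1.
Proof.
move=> [Om_ne _] [_ [_ [_ [near_d0 near_d1]]]] pq Om_pq.
by split; [exact: not_parallel_of_dist0 Om_ne Om_pq near_d0
          | exact: not_parallel_of_dist0 Om_ne Om_pq near_d1].
Qed.
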